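(* Let $p\geq 7$ be a prime and let $M$ be the $p\times p$ tridiagonal matrix with diagonal entries $M_{11}=M_{pp}=p-1$ and $M_{ii}=p-2$ for $2\leq i\leq p-1$, entries $M_{i,i+1}=M_{i+1,i}=1$ for $1\leq i\leq p-1$, and all other entries $0$. Let $x_1,\dots,x_p$ be non-negative integers satisfying $M(x_1,\ldots,x_p)^t\leq (p-1)!\,\mathbf{1}$ (entrywise, $\mathbf{1}$ the all-ones vector), and let $x_{\max}=\max\{x_i:1\leq i\leq p\}$. Then: (1) $|\{i\in[p] : x_i\leq \frac{(p-1)!}{p}\}|\geq \lceil \frac{p}{3}\rceil$; (2) if $\sum_{i=1}^p x_i=(p-1)!-k$, then $|\{i : x_i=x_{\max}\}|\geq p-k-2$; (3) $\sum_{i=1}^p x_i\leq (p-1)!-\lceil\frac{p}{3}\rceil+2$. *)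

From mathcomp Require Import all_boot.
Set Implicit Arguments. Unset Strict Implicit. Unset Printing Implicit Defensive.

(* The p x p tridiagonal matrix M of the paper, with 0-based indices
   0..p-1 (paper index i corresponds to i-1 here):
   M_{00} = M_{p-1,p-1} = p-1, M_{ii} = p-2 otherwise on the diagonal,
   M_{i,i+1} = M_{i+1,i} = 1, all other entries 0. *)
Definition Mentry (p : nat) (i j : 'I_p) : nat :=
  if i == j then (if (i == 0 :> nat) || (i == p.-1 :> nat) then p - 1 else p - 2)
  else if (i.+1 == j :> nat) || (j.+1 == i :> nat) then 1 else 0.

Definition Mx_le (p : nat) (x : 'I_p -> nat) : Prop :=
  forall i : 'I_p, \sum_(j < p) Mentry i j * x j <= (p.-1)`!.

Definition ceil3 (n : nat) : nat := (n + 2) %/ 3.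

(* By Wilson's theorem p divides (p-1)! + 1; with Q := ((p-1)! + 1) / p put
   y := Q - x.  Every row of M sums to p, so M y >= 1 entrywise, and
   x_i <= (p-1)!/p exactly when y_i >= 1.  Every row of M therefore meets a
   coordinate with y_j >= 1 while every column has at most three nonzero
   entries, which gives (1).  Write y = y+ - y-.  A negative coordinate y_i
   forces (M y+)_i >= 1 + (p-2) y-_i; summing over the negative rows, where the
   off-diagonal part of each column of M sums to at most 2, yields
   1 + (p-2) sum y- <= 2 sum y+.  Hence sum y = (p-1)! + 1 - sum x is large,
   which is (3), and the same estimates at a minimum of y (a maximum of x)
   give (2). *)

From mathcomp Require Import all_boot all_order all_algebra zify lra.
Import Order.TTheory GRing.Theory Num.Theory.

Lemma sum_ord_eq (n k : nat) : \sum_(j < n) (j == k :> nat) = (k < n).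
Proof.
case: (ltnP k n) => [lt_kn|le_nk].
  rewrite (bigD1 (Ordinal lt_kn)) //= eqxx big1 // => j.
  by rewrite -val_eqE /= => /negbTE ->.
by rewrite big1 // => j _; rewrite ltn_eqF // (leq_trans (ltn_ord j) le_nk).
Qed.

Lemma sum_ord_succ_eq (n k : nat) : \sum_(j < n) (j.+1 == k) = (0 < k <= n).
Proof. by case: k => [|k]; [rewrite big1 | rewrite -(sum_ord_eq n k)]. Qed.

Lemma Mentry_sym {p : nat} (i j : 'I_p) : Mentry i j = Mentry j i.
Proof. by rewrite /Mentry eq_sym; case: eqP => [->|_] //; rewrite orbC. Qed.

Lemma Mentry_diag {p : nat} (i : 'I_p) : p - 2 <= Mentry i i.
Proof. by rewrite /Mentry eqxx; case: ifP => _; lia. Qed.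

Lemma Mentry_offdiag {p : nat} (i j : 'I_p) : i != j -> Mentry i j <= 1.
Proof. by rewrite /Mentry => /negbTE ->; case: ifP. Qed.

Lemma Mentry_row_sum {p : nat} : 2 < p -> forall i : 'I_p, \sum_(j < p) Mentry i j = p.
Proof.
move=> p_gt2 i.
have MentryE j : Mentry i j =
    (if j == i then Mentry i i else 0) + (j == i.+1 :> nat) + (j.+1 == i).
  rewrite /Mentry [j == i]eq_sym; case: eqP => [<-|/eqP ne]; first by rewrite !eqxx; lia.
  by rewrite [j == _ :> nat]eq_sym [j.+1 == _]eq_sym; case: eqP; case: eqP => //=; lia.
rewrite (eq_bigr _ (fun j _ => MentryE j)) !big_split /= -big_mkcond big_pred1_eq.
rewrite sum_ord_eq sum_ord_succ_eq /Mentry eqxx.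
by have := ltn_ord i; case: eqP; case: eqP => /=; lia.
Qed.

Local Open Scope ring_scope.

Definition pos_part (a : int) : int := if 0 <= a then a else 0.
Definition neg_part (a : int) : int := if 0 <= a then 0 else - a.

Lemma pos_part_ge0 (a : int) : 0 <= pos_part a.
Proof. by rewrite /pos_part; case: ifP. Qed.

Lemma neg_part_ge0 (a : int) : 0 <= neg_part a.
Proof. rewrite /neg_part; case: ifP => //; lia. Qed.

Lemma pos_partBneg_part (a : int) : pos_part a - neg_part a = a.
Proof. rewrite /pos_part /neg_part; case: ifP => _; lia. Qed.

Lemma sum_pos_partBneg_part {n : nat} (y : 'I_n -> int) :
  \sum_i y i = \sum_i pos_part (y i) - \sum_i neg_part (y i).
Proof. by rewrite -sumrB; apply: eq_bigr => i _; rewrite pos_partBneg_part. Qed.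

Lemma le_pos_part (a : int) : a <= pos_part a.
Proof. rewrite /pos_part; case: ifP => //; lia. Qed.

Lemma pos_part_lt0 (a : int) : a < 0 -> pos_part a = 0.
Proof. by rewrite /pos_part ltNge => /negbTE ->. Qed.

Lemma neg_part_lt0 (a : int) : a < 0 -> neg_part a = - a.
Proof. by rewrite /neg_part ltNge => /negbTE ->. Qed.

Lemma neg_part_ge0_eq0 (a : int) : 0 <= a -> neg_part a = 0.
Proof. by rewrite /neg_part => ->. Qed.

Lemma card_set_sumr (T : finType) (P : pred T) :
  #|[set x | P x]|%:R = \sum_x (P x)%:R :> int.
Proof.
rewrite -sum1_card natr_sum big_mkcond; apply: eq_bigr => x _.
by rewrite inE; case: (P x).
Qed.

Lemma pos_neg_gap {n a P N : int} : 7 <= n -> 2 <= a -> a <= N ->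
  1 + (n - 2) * a <= P -> 1 + (n - 2) * N <= 2 * P -> n - 1 <= P - N.
Proof. nia. Qed.

Lemma sumr_const_sub (n Q : nat) (x : 'I_n -> nat) :
  \sum_i (Q%:Z - (x i)%:Z) = (Q * n)%N%:Z - (\sum_i x i)%N%:Z.
Proof.
rewrite sumrB sumr_const card_ord -!natz natr_sum natrM mulr_natr.
by congr (_ *+ _ - _); apply: eq_bigr => i _; rewrite natz.
Qed.

Section HeavyDiagonal.

Context {n : nat} {A : 'I_n -> 'I_n -> nat}.
Hypothesis A_sym : forall i j, A i j = A j i.
Hypothesis A_row_sum : forall i, (\sum_j A i j)%N = n.
Hypothesis A_diag : forall i, (n - 2 <= A i i)%N.
Hypothesis A_offdiag : forall i j, i != j -> (A i j <= 1)%N.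

Lemma A_offdiag_row_sum i : (\sum_(j | j != i) A i j <= 2)%N.
Proof. by have := A_row_sum i; rewrite (bigD1 i) //=; have := A_diag i; lia. Qed.

Lemma A_col_support j : (\sum_i (0 < A i j)%N <= 3)%N.
Proof.
rewrite (bigD1 j) //=; apply: leq_add (leq_b1 _) _.
apply: leq_trans (A_offdiag_row_sum j); apply: leq_sum => i _.
by rewrite A_sym; case: (A j i).
Qed.

Lemma A_mul_shift_ge1 (x : 'I_n -> nat) (Q c : nat) :
  (c < Q * n)%N -> (forall i, \sum_j A i j * x j <= c)%N ->
  forall i, 1 <= \sum_j (A i j)%:Z * (Q%:Z - (x j)%:Z).
Proof.
move=> lt_c_Qn Ax_le i.
have -> : \sum_j (A i j)%:Z * (Q%:Z - (x j)%:Z) =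
          (\sum_j A i j)%N%:R * Q%:Z - (\sum_j A i j * x j)%N%:R.
  rewrite !natr_sum mulr_suml -sumrB; apply: eq_bigr => j _.
  by rewrite natrM !natz mulrBr.
by rewrite A_row_sum; have := Ax_le i; lia.
Qed.

Context {y : 'I_n -> int}.
Hypothesis Ay_ge1 : forall i, 1 <= \sum_j (A i j)%:Z * y j.

Lemma n_le_3_card_ge1 : (n <= 3 * #|[set i | (1 <= y i)%R]|)%N.
Proof.
have row_hit i : exists j, (0 < A i j)%N && (1 <= y j).
  apply/existsP; apply: contraLR (Ay_ge1 i) => /existsPn no_hit.
  rewrite -ltNge (@le_lt_trans _ _ 0) //.
  apply: sumr_le0 => j _; move: (no_hit j); rewrite negb_and -ltNge lt0n negbK.
  case/orP => [/eqP-> | ]; first by rewrite mul0r.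
  by move=> y_lt1; apply: mulr_ge0_le0 => //; lia.
rewrite mulnC -sum_nat_const -[X in (X <= _)%N](card_ord n) -sum1_card.
apply: leq_trans (_ : _ <= \sum_(j in [set i | (1 <= y i)%R]) \sum_i (0 < A i j))%N _.
  rewrite exchange_big /=; apply: leq_sum => i _.
  have [j /andP[A_ij y_j]] := row_hit i.
  by rewrite (bigD1 j) ?inE //= A_ij.
by apply: leq_sum => j _; apply: A_col_support.
Qed.

Lemma row_pos_part_ge_neg_part i : y i < 0 ->
  1 + (n%:Z - 2) * neg_part (y i) <= \sum_j (A i j)%:Z * pos_part (y j).
Proof.
move=> y_neg; have := Ay_ge1 i; rewrite (bigD1 i) //= => Ay_i.
rewrite (bigD1 i) //= pos_part_lt0 // mulr0 add0r.
have off_diag : \sum_(j < n | j != i) (A i j)%:Z * y j <=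
                \sum_(j < n | j != i) (A i j)%:Z * pos_part (y j).
  by apply: ler_sum => j _; apply: ler_wpM2l => //; apply: le_pos_part.
have diag : (A i i)%:Z * y i <= (n%:Z - 2) * y i.
  by apply: ler_wnM2r; [lia | rewrite /=; have := A_diag i; lia].
by rewrite neg_part_lt0 // mulrN lerBlDr addrC (le_trans Ay_i (lerD diag off_diag)).
Qed.

Lemma row_pos_part_le_sum i : y i < 0 ->
  \sum_j (A i j)%:Z * pos_part (y j) <= \sum_j pos_part (y j).
Proof.
move=> y_neg; apply: ler_sum => j _.
have [<-|ne_ij] := eqVneq i j; first by rewrite pos_part_lt0 // mulr0.
by apply: ler_piMl; [apply: pos_part_ge0 | have := A_offdiag _ _ ne_ij; lia].
Qed.

Lemma neg_rows_pos_part_le :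
  \sum_i (if y i < 0 then \sum_j (A i j)%:Z * pos_part (y j) else 0)
    <= 2 * \sum_j pos_part (y j).
Proof.
apply: le_trans (_ : _ <= \sum_i \sum_(j | j != i) (A i j)%:Z * pos_part (y j)) _.
  apply: ler_sum => i _; case: ifP => [y_neg|_].
    by rewrite (bigD1 i) //= pos_part_lt0 // mulr0 add0r.
  by apply: sumr_ge0 => j _; apply: mulr_ge0 => //; apply: pos_part_ge0.
rewrite (exchange_big_dep predT) //= mulr_sumr; apply: ler_sum => j _.
rewrite -mulr_suml ler_wpM2r ?pos_part_ge0 //.
under eq_bigl => i do rewrite eq_sym.
under eq_bigr => i _ do rewrite A_sym -natz.
by rewrite -natr_sum ler_nat A_offdiag_row_sum.
Qed.

Lemma sum_neg_part_le_sum_pos_part i0 : y i0 < 0 ->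
  1 + (n%:Z - 2) * \sum_i neg_part (y i) <= 2 * \sum_i pos_part (y i).
Proof.
move=> y0_neg; apply: le_trans neg_rows_pos_part_le.
have per_row i : (if y i < 0 then 1 else 0) + (n%:Z - 2) * neg_part (y i) <=
                 if y i < 0 then \sum_j (A i j)%:Z * pos_part (y j) else 0.
  case: ifPn => [y_neg|]; first exact: row_pos_part_ge_neg_part.
  by rewrite -leNgt => /neg_part_ge0_eq0 ->; rewrite mulr0 addr0.
apply: le_trans (ler_sum _ (fun i _ => per_row i)).
rewrite big_split /= -mulr_sumr lerD2r (bigD1 i0) //= y0_neg lerDl.
by apply: sumr_ge0 => i _; case: ifP.
Qed.

Lemma neg_part_le_sum i : neg_part (y i) <= \sum_j neg_part (y j).
Proof.
by rewrite (bigD1 i) //= lerDl; apply: sumr_ge0 => j _; apply: neg_part_ge0.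
Qed.

Lemma n_le_3_sum_add1 : (6 < n)%N -> n%:Z <= 3 * \sum_i y i + 1.
Proof.
move=> n_gt6; rewrite sum_pos_partBneg_part.
have [/existsP[i0 y0_neg] | /existsPn y_ge0] := boolP [exists i, y i < 0].
  have := sum_neg_part_le_sum_pos_part i0 y0_neg; have := neg_part_le_sum i0.
  rewrite neg_part_lt0 //; nia.
have -> : \sum_i neg_part (y i) = 0.
  by apply: big1 => i _; rewrite neg_part_ge0_eq0 // leNgt y_ge0.
have pos_ge_card : #|[set i | 1 <= y i]|%:R <= \sum_i pos_part (y i).
  rewrite card_set_sumr; apply: ler_sum => i _.
  rewrite /pos_part; case: (boolP (1 <= y i)) => y_ge1; case: ifP => /= y_ge0'; lia.
by have := n_le_3_card_ge1; rewrite -(ler_nat int) natrM; lia.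
Qed.

Lemma n_le_sum_add1_card_min i0 : (6 < n)%N -> (forall i, y i0 <= y i) ->
  n%:Z <= \sum_i y i + 1 + #|[set i | y i == y i0]|%:R.
Proof.
move=> n_gt6 y0_min; rewrite card_set_sumr.
have [y0_ge0 | y0_neg] := leP 0 (y i0).
  suff : \sum_i (1 - (y i == y i0)%:R) <= \sum_i y i.
    by rewrite sumrB sumr_const card_ord; lra.
  apply: ler_sum => i _; have := y0_min i.
  by case: eqP => [-> | ne] /=; lia.
have C_ge0 : 0 <= \sum_i (y i == y i0)%:R :> int by apply: sumr_ge0.
have P_lower := le_trans (row_pos_part_ge_neg_part i0 y0_neg) (row_pos_part_le_sum i0 y0_neg).
have PN_bound := sum_neg_part_le_sum_pos_part i0 y0_neg.
have N_lower := neg_part_le_sum i0.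
rewrite neg_part_lt0 // in P_lower N_lower.
rewrite (sum_pos_partBneg_part y).
have [y0_m1 | y0_ne_m1] := eqVneq (y i0) (-1).
  have : \sum_i neg_part (y i) <= \sum_i (y i == y i0)%:R.
    apply: ler_sum => i _; have := y0_min i; rewrite /neg_part y0_m1.
    by case: eqP => [-> // | ne]; case: ifP; lia.
  rewrite y0_m1 in P_lower; lra.
have n_ge7 : 7 <= n%:Z by lia.
have y0_le_m2 : 2 <= - y i0 by lia.
have := pos_neg_gap n_ge7 y0_le_m2 N_lower P_lower PN_bound; lra.
Qed.

End HeavyDiagonal.

Local Close Scope ring_scope.

Theorem theorem3p4 (p : nat) (x : 'I_p -> nat) :
  prime p -> 7 <= p -> Mx_le x ->
  [/\ ceil3 p <= #|[set i : 'I_p | x i * p <= (p.-1)`!]|,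
      (forall k : nat, \sum_(i < p) x i + k = (p.-1)`! ->
         p - k - 2 <= #|[set i : 'I_p | x i == \max_(j < p) x j]|)
    & \sum_(i < p) x i + ceil3 p <= (p.-1)`! + 2].
Proof.
move=> p_prime p_ge7 Mx_ok; have p_gt2 : 2 < p by lia.
have [Q QpE] : exists Q, Q * p = (p.-1)`!.+1.
  by exists ((p.-1)`!.+1 %/ p); rewrite divnK // -Wilson ?prime_gt1.
pose y i := (Q%:Z - (x i)%:Z)%R.
have My_ge1 : forall i, (1 <= \sum_j (Mentry i j)%:Z * y j)%R.
  by apply: (A_mul_shift_ge1 (Mentry_row_sum p_gt2) _ Q ((p.-1)`!)) Mx_ok; rewrite QpE.
have sum_y : (\sum_i y i = (p.-1)`!.+1%:Z - (\sum_i x i)%:Z)%R.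
  by rewrite sumr_const_sub QpE.
split.
- have -> : [set i | x i * p <= (p.-1)`!] = [set i | (1 <= y i)%R].
    apply/setP => i; rewrite !inE -ltnS -QpE ltn_pmul2r ?prime_gt0 //.
    by apply/idP/idP; rewrite /y; lia.
  have := n_le_3_card_ge1 Mentry_sym (Mentry_row_sum p_gt2) Mentry_diag My_ge1.
  rewrite /ceil3; lia.
- move=> k sum_xk.
  have p_pos : 0 < #|'I_p| by rewrite card_ord prime_gt0.
  have [i0 max_x] := bigop.eq_bigmax x p_pos.
  have -> : [set i | x i == \max_j x j] = [set i | (y i == y i0)%R].
    by apply/setP => i; rewrite !inE max_x /y; apply/eqP/eqP; lia.
  have y0_min i : (y i0 <= y i)%R by have := leq_bigmax (F := x) i; rewrite max_x /y; lia.
  have := n_le_sum_add1_card_min Mentry_sym (Mentry_row_sum p_gt2) Mentry_diag Mentry_offdiag My_ge1 i0 p_ge7 y0_min.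
  (* [set] merges the differently elaborated copies of these terms, which [lia]
     would otherwise treat as distinct atoms. *)
  rewrite sum_y -sum_xk; set C := #|_|; set S := \sum_(i < p) x i; lia.
- have := n_le_3_sum_add1 Mentry_sym (Mentry_row_sum p_gt2) Mentry_diag My_ge1 p_ge7.
  rewrite sum_y /ceil3; set S := \sum_(i < p) x i; lia.
Qed.
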